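(* Let $P$ be an operad and $n\ge1$. The complex $(\Omega(PA),d)$ is exact, i.e. has zero cohomology in every degree.
   Context: All vector spaces over $\mathbb{Q}$. An operad consists of vector spaces $P[j]$ with $\Sigma_j$-actions, $P[0]=0$, with associative equivariant substitution and a unit (only the species structure is used below). Let $W$ be the super vector space with even basis $x_1,\dots,x_n$ and odd basis $dx_1,\dots,dx_n$. Set $\Omega(PA)=\bigoplus_{j\ge1}(P[j]\otimes W^{\otimes j})_{\Sigma_j}$, where $\Sigma_j$ acts on $W^{\otimes j}$ by permuting factors with the Koszul sign rule (transposing two odd factors gives a sign); it is $\mathbb{Z}$-graded by the number of odd factors, with $\Omega^0(PA)=PA=\bigoplus_{j\ge1}(P[j]\otimes V^{\otimes j})_{\Sigma_j}$, $V=\mathrm{span}(x_i)$. The differential is $d(p\otimes w_1\otimes\cdots\otimes w_j)=\sum_{k=1}^j(-1)^{\epsilon_k}\,p\otimes w_1\otimes\cdots\otimes d(w_k)\otimes\cdots\otimes w_j$, where $d(x_i)=dx_i$, $d(dx_i)=0$ and $\epsilon_k$ is the number of odd $w_l$ with $l<k$ (so $d$ is the odd superderivation of the free $P$-superalgebra with $d^2=0$). *)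

From HB Require Import structures.
From mathcomp Require Import all_boot all_order all_fingroup all_algebra.
Set Implicit Arguments. Unset Strict Implicit. Unset Printing Implicit Defensive.
Import GRing.Theory.
Local Open Scope ring_scope.

(** A species of Q-vector spaces: P[j] with a linear (right) Sigma_j-action.
    (mathcomp's permutation product is left-to-right: (s * t) x = t (s x),
    so the natural actions are right actions.) *)
Record species := Species {
  sp_obj :> nat -> lmodType rat;
  sp_act : forall j, sp_obj j -> 'S_j -> sp_obj j;
  sp_act1 : forall j (p : sp_obj j), sp_act p 1%g = p;
  sp_actM : forall j (p : sp_obj j) (s t : 'S_j),
      sp_act p (s * t)%g = sp_act (sp_act p s) t;
  sp_actlin : forall j (s : 'S_j) (a : rat) (p q : sp_obj j),
      sp_act (a *: p + q) s = a *: sp_act p s + sp_act q s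
}.

(** Basis letters of W: (i, false) = x_i (even), (i, true) = dx_i (odd). *)
Definition letter (n : nat) := ('I_n * bool)%type.
(** Basis words of W^{(x)j}: w_1 (x) ... (x) w_j. *)
Definition word (n j : nat) := {ffun 'I_j -> letter n}.

(** P[j] (x) W^{(x)j}, written in the basis of W^{(x)j}. *)
Definition T (P : species) (n j : nat) := {ffun word n j -> P j}.

Definition pt (P : species) n j (w : word n j) (p : P j) : T P n j :=
  [ffun v => if v == w then p else 0].

(** Right action of Sigma_j on words: the factor in position a moves to
    position s a. *)
Definition wact n j (w : word n j) (s : 'S_j) : word n j :=
  [ffun k => w ((s^-1)%g k)].

Definition ksign n j (s : 'S_j) (w : word n j) : rat :=
  (-1) ^+ #|[set ab : 'I_j * 'I_j |
              [&& (ab.1 < ab.2)%N, (w ab.1).2, (w ab.2).2 & (s ab.2 < s ab.1)%N]]|.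

(** Generators of the relations defining the Sigma_j-coinvariants
    (diagonal action with Koszul sign): s.(p (x) w) - p (x) w. *)
Definition relgen (P : species) n j (s : 'S_j) (w : word n j) (p : P j)
  : T P n j :=
  ksign s w *: pt (wact w s) (sp_act p s) - pt w p.

(** Membership in the span of the relations (the kernel of the projection
    to coinvariants). *)
Definition inK_j (P : species) n j (c : T P n j) : Prop :=
  exists l : seq ('S_j * word n j * P j),
    c = \sum_(x <- l) relgen x.1.1 x.1.2 x.2.

Definition nodd_before n j (w : word n j) (k : 'I_j) : nat :=
  #|[set l : 'I_j | (l < k)%N && (w l).2]|.
Definition nodd n j (w : word n j) : nat := #|[set l : 'I_j | (w l).2]|.

Definition setodd n j (w : word n j) (k : 'I_j) : word n j :=
  [ffun l => if l == k then ((w k).1, true) else w l].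

Definition dT (P : species) n j (c : T P n j) : T P n j :=
  \sum_(w : word n j) \sum_(k < j | ~~ (w k).2)
     ((-1) ^+ nodd_before w k : rat) *: pt (setodd w k) (c w).

(** Representatives: families (c_j)_j with c_j in P[j] (x) W^{(x)j},
    finitely supported (direct sum). *)
Definition Om (P : species) (n : nat) := forall j, T P n j.
Definition finsupp P n (c : Om P n) : Prop :=
  exists N, forall j, (N <= j)%N -> c j = 0.
(** c represents 0 in Omega(PA) = (+)_j (P[j] (x) W^{(x)j})_{Sigma_j}. *)
Definition inK P n (c : Om P n) : Prop := forall j, inK_j (c j).
Definition dOm P n (c : Om P n) : Om P n := fun j => dT (c j).
Definition homog P n (k : nat) (c : Om P n) : Prop :=
  forall j (w : word n j), c j w != 0 -> nodd w = k.

From HB Require Import structures.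
From mathcomp Require Import all_boot all_order all_fingroup all_algebra zify.
Set Implicit Arguments. Unset Strict Implicit. Unset Printing Implicit Defensive.
Import GRing.Theory Num.Theory.
Local Open Scope ring_scope.

(* The operator h that turns an odd letter dx_i back into x_i, with the Koszul
   sign of the odd letters in front of it, satisfies d h + h d = j on
   P[j] (x) W^(x)j: every position contributes the identity once (it is made
   odd and back, or even and back), while the two cross terms for a pair of
   distinct positions carry opposite signs.  Since h commutes with the signed
   Sigma_j-action, it preserves the relations defining the coinvariants.
   Dividing by j over Q, a cocycle c of arity j > 0 is d (h c / j) modulo the
   relations; arity 0 vanishes because P[0] = 0, and in degree 0 already
   h c = 0. *)

Lemma card_set_sum (T : finType) (p : pred T) : #|[set x | p x]| = (\sum_x p x)%N.
Proof. by rewrite -sum1dep_card big_mkcond; apply: eq_bigr => x _; case: (p x). Qed.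

Section Words.
Variables n j : nat.
Implicit Types (v w : word n j) (k l : 'I_j).

Definition seteven w k : word n j :=
  [ffun l => if l == k then ((w k).1, false) else w l].

Lemma setoddE w k l : setodd w k l = if l == k then ((w k).1, true) else w l.
Proof. by rewrite ffunE. Qed.

Lemma setevenE w k l : seteven w k l = if l == k then ((w k).1, false) else w l.
Proof. by rewrite ffunE. Qed.

Lemma setodd_k w k : (setodd w k k).2. Proof. by rewrite setoddE eqxx. Qed.
Lemma seteven_k w k : ~~ (seteven w k k).2. Proof. by rewrite setevenE eqxx. Qed.

Lemma setodd_ne w k l : l != k -> setodd w k l = w l.
Proof. by rewrite setoddE => /negbTE ->. Qed.
Lemma seteven_ne w k l : l != k -> seteven w k l = w l.
Proof. by rewrite setevenE => /negbTE ->. Qed.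

Lemma setodd_id w k : (w k).2 -> setodd w k = w.
Proof.
move=> wk; apply/ffunP=> l; rewrite setoddE; case: eqP => // ->.
by case: (w k) wk => a b /= ->.
Qed.

Lemma seteven_id w k : ~~ (w k).2 -> seteven w k = w.
Proof.
move=> wk; apply/ffunP=> l; rewrite setevenE; case: eqP => // ->.
by case: (w k) wk => a [].
Qed.

Lemma seteven_setodd w k : seteven (setodd w k) k = seteven w k.
Proof. by apply/ffunP=> l; rewrite !setevenE !setoddE eqxx; case: eqP. Qed.

Lemma setodd_seteven w k : setodd (seteven w k) k = setodd w k.
Proof. by apply/ffunP=> l; rewrite !setoddE !setevenE eqxx; case: eqP. Qed.

Lemma seteven_setoddC w k l : k != l ->
  seteven (setodd w l) k = setodd (seteven w k) l.
Proof.
move=> kl; apply/ffunP=> m; rewrite !(setevenE, setoddE).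
by repeat (case: eqP => //= ?; subst); rewrite eqxx in kl.
Qed.

Lemma setodd_eq_seteven v w k :
  (~~ (w k).2 && (v == setodd w k)) = ((v k).2 && (w == seteven v k)).
Proof.
apply/andP/andP=> [[wk /eqP ->]|[vk /eqP ->]]; split.
- exact: setodd_k.
- by rewrite seteven_setodd seteven_id.
- exact: seteven_k.
- by rewrite setodd_seteven setodd_id.
Qed.

Lemma count_odd_seteven (Q : pred 'I_j) w k :
  #|[set l | Q l && (w l).2]| =
  (#|[set l | Q l && (seteven w k l).2]| + (Q k && (w k).2))%N.
Proof.
rewrite !card_set_sum (bigD1 k) //= [in RHS](bigD1 k) //= (negbTE (seteven_k w k)).
rewrite andbF add0n addnC; congr (_ + _)%N.
by apply: eq_bigr => l lk; rewrite seteven_ne.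
Qed.

Lemma nodd_before_seteven w k l :
  nodd_before w l = (nodd_before (seteven w k) l + ((k < l)%N && (w k).2))%N.
Proof. exact: (count_odd_seteven (fun m => (m < l)%N)). Qed.

Lemma nodd_before_setodd w k l :
  nodd_before (setodd w k) l = (nodd_before (seteven w k) l + (k < l)%N)%N.
Proof. by rewrite (nodd_before_seteven _ k) seteven_setodd setodd_k andbT. Qed.

Lemma nodd_before_seteven_k w k : nodd_before (seteven w k) k = nodd_before w k.
Proof. by rewrite [RHS](nodd_before_seteven w k k) ltnn addn0. Qed.

Lemma nodd_before_setodd_k w k : nodd_before (setodd w k) k = nodd_before w k.
Proof. by rewrite nodd_before_setodd ltnn addn0 nodd_before_seteven_k. Qed.

Lemma nodd_setodd w k : ~~ (w k).2 -> nodd (setodd w k) = (nodd w).+1.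
Proof.
move=> wk; have := count_odd_seteven predT (setodd w k) k.
rewrite seteven_setodd seteven_id // setodd_k addn1.
have setT_odd w' : [set l | predT l && (w' l).2] = [set l | (w' l).2].
  by apply/setP=> l; rewrite !in_set.
by rewrite !setT_odd.
Qed.

Lemma wact_perm w (s : 'S_j) k : wact w s (s k) = w k.
Proof. by rewrite ffunE permK. Qed.

Lemma seteven_wact w (s : 'S_j) k : seteven (wact w s) (s k) = wact (seteven w k) s.
Proof.
apply/ffunP=> m; rewrite !ffunE permK.
case: (eqVneq m (s k)) => [->|mk]; first by rewrite permK eqxx.
by case: eqP => // E; move: mk; rewrite -E permKV eqxx.
Qed.

End Words.

Definition sgn (m : nat) : rat := (-1) ^+ m.

Lemma sgnD a b : sgn (a + b) = sgn a * sgn b. Proof. exact: exprD. Qed.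
Lemma sgnS a : sgn a.+1 = - sgn a. Proof. by rewrite /sgn exprS mulN1r. Qed.
Lemma sgn_double a : sgn (a + a) = 1.
Proof. by rewrite /sgn addnn -mul2n exprM sqrrN expr1n. Qed.

Definition odd_inversion n j (s : 'S_j) (w : word n j) (a b : 'I_j) : bool :=
  [&& (a < b)%N, (w a).2, (w b).2 & (s b < s a)%N].

Lemma ksignE n j (s : 'S_j) (w : word n j) :
  ksign s w = sgn (\sum_a \sum_b odd_inversion s w a b)%N.
Proof. by rewrite /ksign card_set_sum pair_bigA. Qed.

Section OddInversions.
Variables (n j : nat) (s : 'S_j) (w : word n j) (k : 'I_j).

Let odd_left_above := (\sum_(a < j) [&& (a < k)%N, (w a).2 & (s k < s a)%N])%N.
Let odd_left_below := (\sum_(a < j) [&& (a < k)%N, (w a).2 & (s a < s k)%N])%N.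
Let odd_right_below := (\sum_(b < j) [&& (k < b)%N, (w b).2 & (s b < s k)%N])%N.

Lemma nodd_before_split : nodd_before w k = (odd_left_below + odd_left_above)%N.
Proof.
rewrite /nodd_before card_set_sum -big_split /=; apply: eq_bigr => a _.
case: ltnP => //= ak; case: (w a).2 => //=.
case: ltngtP => // /val_inj/perm_inj akE.
by rewrite akE ltnn in ak.
Qed.

Lemma nodd_before_wact :
  nodd_before (wact w s) (s k) = (odd_left_below + odd_right_below)%N.
Proof.
rewrite /nodd_before card_set_sum (reindex_inj (@perm_inj _ s)) -big_split /=.
apply: eq_bigr => a _; rewrite wact_perm; case: (w a).2; rewrite /= ?andbF //.
case: (ltngtP a k) => [||/val_inj ->]; rewrite ?andbT ?andbF ?addn0 ?ltnn //.
Qed.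

Lemma odd_inversions_seteven : (w k).2 ->
  (\sum_a \sum_b odd_inversion s w a b =
   \sum_a \sum_b odd_inversion s (seteven w k) a b
   + odd_left_above + odd_right_below)%N.
Proof.
move=> wk.
have split_at_k a b : odd_inversion s w a b =
    (odd_inversion s (seteven w k) a b
     + (if b == k then [&& (a < k)%N, (w a).2 & (s k < s a)%N] : nat else 0)
     + (if a == k then [&& (k < b)%N, (w b).2 & (s b < s k)%N] : nat else 0))%N :> nat.
  rewrite /odd_inversion.
  case: (eqVneq a k) => [->|ak]; case: (eqVneq b k) => [->|bk].
  - by rewrite ltnn.
  - by rewrite (negbTE (seteven_k w k)) wk /= andbF !add0n.
  - by rewrite (negbTE (seteven_k w k)) wk /= !andbF add0n addn0.
  - by rewrite !seteven_ne // !addn0.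
under eq_bigr => a _ do under eq_bigr => b _ do rewrite split_at_k.
under eq_bigr => a _ do rewrite !big_split /=.
rewrite !big_split /= [in X in (_ + X)%N]exchange_big /=.
congr (_ + _ + _)%N; apply: eq_bigr => c _.
  by rewrite -big_mkcond big_pred1_eq.
by rewrite -big_mkcond big_pred1_eq.
Qed.

Lemma ksign_seteven : (w k).2 ->
  ksign s w * sgn (nodd_before (wact w s) (s k)) =
  sgn (nodd_before w k) * ksign s (seteven w k).
Proof.
move=> wk; rewrite !ksignE odd_inversions_seteven // nodd_before_wact nodd_before_split.
set N := (\sum_a \sum_b _)%N; rewrite -!sgnD.
have -> : (N + odd_left_above + odd_right_below + (odd_left_below + odd_right_below)
          = odd_left_below + odd_left_above + N + (odd_right_below + odd_right_below))%N.
  by lia.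
by rewrite sgnD sgn_double mulr1.
Qed.

End OddInversions.

Lemma scaler_if0 (R : pzRingType) (V : lmodType R) (a : R) (b : bool) (x : V) :
  a *: (if b then x else 0) = if b then a *: x else 0.
Proof. by case: b; rewrite ?scaler0. Qed.

Section Differential.
Variables (P : species) (n j : nat).
Implicit Types (c : T P n j) (v w : word n j) (k l : 'I_j).

Lemma ptZ w (a : rat) (p : P j) : pt w (a *: p) = a *: pt w p.
Proof. by apply/ffunP=> v; rewrite !ffunE; case: ifP; rewrite ?scaler0. Qed.

Lemma dTE c v :
  dT c v = \sum_(k < j | (v k).2) sgn (nodd_before v k) *: c (seteven v k).
Proof.
rewrite /dT sum_ffunE; under eq_bigr => w _ do rewrite sum_ffunE.
rewrite (exchange_big_dep predT) //= [RHS]big_mkcond /=; apply: eq_bigr => k _.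
rewrite big_mkcond /=.
under eq_bigr => w _ do
  rewrite !ffunE !scaler_if0 -if_and setodd_eq_seteven.
case: ifP => vk /=; last by rewrite big1 // => w _; rewrite andFb.
rewrite (bigD1 (seteven v k)) //= eqxx big1 ?addr0 ?nodd_before_seteven_k //.
by move=> w /negbTE ->.
Qed.

Definition hT c : T P n j :=
  [ffun v : word n j => \sum_(k < j | ~~ (v k).2) sgn (nodd_before v k) *: c (setodd v k)].

Lemma hT_pt w (p : P j) :
  hT (pt w p) = \sum_(k < j | (w k).2) sgn (nodd_before w k) *: pt (seteven w k) p.
Proof.
apply/ffunP=> v; rewrite !ffunE sum_ffunE big_mkcond [RHS]big_mkcond /=.
apply: eq_bigr => k _; rewrite !ffunE !scaler_if0.
rewrite -!if_and eq_sym setodd_eq_seteven.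
by case: ifP => // /andP[_ /eqP ->]; rewrite nodd_before_seteven_k.
Qed.

Lemma dT_is_linear : linear (@dT P n j).
Proof.
move=> a c1 c2; apply/ffunP=> v; rewrite !ffunE !dTE scaler_sumr -big_split /=.
by apply: eq_bigr => k _; rewrite !ffunE scalerDr !scalerA mulrC.
Qed.

Lemma hT_is_linear : linear hT.
Proof.
move=> a c1 c2; apply/ffunP=> v; rewrite !ffunE scaler_sumr -big_split /=.
by apply: eq_bigr => k _; rewrite !ffunE scalerDr !scalerA mulrC.
Qed.

End Differential.

HB.instance Definition _ P n j :=
  GRing.isLinear.Build rat (T P n j) (T P n j) *:%R (@dT P n j) (@dT_is_linear P n j).
HB.instance Definition _ P n j :=
  GRing.isLinear.Build rat (T P n j) (T P n j) *:%R (@hT P n j) (@hT_is_linear P n j).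

Section Homotopy.
Variables (P : species) (n j : nat) (c : T P n j).
Implicit Types (v : word n j) (k l : 'I_j).

Let dh_term v k l : P j :=
  if (v k).2 && ~~ (seteven v k l).2 then
    sgn (nodd_before v k + nodd_before (seteven v k) l) *: c (setodd (seteven v k) l)
  else 0.

Let hd_term v k l : P j :=
  if ~~ (v l).2 && (setodd v l k).2 then
    sgn (nodd_before v l + nodd_before (setodd v l) k) *: c (seteven (setodd v l) k)
  else 0.

Let dT_hT_coef v : dT (hT c) v = \sum_k \sum_l dh_term v k l.
Proof.
rewrite dTE big_mkcond; apply: eq_bigr => k _; rewrite /dh_term ffunE.
case: ifP => vk /=; last by rewrite big1.
by rewrite scaler_sumr big_mkcond; apply: eq_bigr => l _; case: ifP; rewrite ?scalerA ?sgnD.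
Qed.

Let hT_dT_coef v : hT (dT c) v = \sum_k \sum_l hd_term v k l.
Proof.
rewrite ffunE big_mkcond exchange_big; apply: eq_bigr => l _; rewrite /hd_term dTE.
case: ifP => vl /=; last by rewrite big1.
by rewrite scaler_sumr big_mkcond; apply: eq_bigr => k _; case: ifP; rewrite ?scalerA ?sgnD.
Qed.

Let homotopy_diag v k : dh_term v k k + hd_term v k k = c v.
Proof.
rewrite /dh_term /hd_term seteven_k setodd_k setodd_seteven seteven_setodd !andbT.
rewrite nodd_before_seteven_k nodd_before_setodd_k !sgn_double !scale1r.
by case: ifP => vk /=; rewrite ?addr0 ?add0r ?setodd_id ?seteven_id ?vk.
Qed.

Let homotopy_offdiag v k l : k != l -> dh_term v k l + hd_term v k l = 0.
Proof.
move=> kl; rewrite /dh_term /hd_term seteven_ne 1?eq_sym // setodd_ne //.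
case: (boolP ((v k).2 && ~~ (v l).2)) => [/andP[vk vl]|]; last first.
  by rewrite andbC => /negbTE ->; rewrite addr0.
rewrite vk vl seteven_setoddC // -scalerDl.
have -> : nodd_before v l = (nodd_before (seteven v k) l + (k < l)%N)%N.
  by rewrite (nodd_before_seteven v k l) vk andbT.
have -> : nodd_before (setodd v l) k = (nodd_before v k + (l < k)%N)%N.
  by rewrite nodd_before_setodd seteven_id.
set a := nodd_before (seteven v k) l; set b := nodd_before v k.
have kl1 : ((k < l)%N + (l < k)%N = 1)%N.
  by move: kl; rewrite neq_ltn; case: ltngtP.
have -> : (a + (k < l)%N + (b + (l < k)%N) = (b + a).+1)%N by lia.
by rewrite sgnS addnC subrr scale0r.
Qed.

Lemma dT_hT_homotopy : dT (hT c) + hT (dT c) = j%:R *: c.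
Proof.
apply/ffunP=> v; rewrite [LHS]ffunE [RHS]ffunE dT_hT_coef hT_dT_coef -big_split /=.
have -> : j%:R *: c v = \sum_(k < j) c v by rewrite sumr_const card_ord scaler_nat.
apply: eq_bigr => k _.
rewrite -big_split (bigD1 k) //= homotopy_diag big1 ?addr0 // => l.
by rewrite eq_sym; apply: homotopy_offdiag.
Qed.

End Homotopy.

Section Coinvariants.
Variables (P : species) (n j : nat).
Implicit Types (c : T P n j) (v w : word n j) (s : 'S_j) (p : P j).

Lemma sp_act0 s : sp_act (0 : P j) s = 0.
Proof.
have := sp_actlin s 1 (0 : P j) 0; rewrite !scale1r addr0 => act00.
by apply: (addrI (sp_act (0 : P j) s)); rewrite addr0 -act00.
Qed.

Lemma sp_actZ s (a : rat) p : sp_act (a *: p) s = a *: sp_act p s.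
Proof. by have := sp_actlin s a p 0; rewrite !addr0 sp_act0 addr0. Qed.

Lemma relgenZ s w (a : rat) p : a *: relgen s w p = relgen s w (a *: p).
Proof. by rewrite /relgen sp_actZ !ptZ scalerBr !scalerA mulrC. Qed.

Lemma inK_j0 : inK_j (0 : T P n j).
Proof. by exists [::]; rewrite big_nil. Qed.

Lemma inK_jD c1 c2 : inK_j c1 -> inK_j c2 -> inK_j (c1 + c2).
Proof. by move=> [l1 ->] [l2 ->]; exists (l1 ++ l2); rewrite big_cat. Qed.

Lemma inK_jZ (a : rat) c : inK_j c -> inK_j (a *: c).
Proof.
move=> [l ->]; exists [seq (x.1.1, x.1.2, a *: x.2) | x <- l].
by rewrite big_map scaler_sumr; apply: eq_bigr => x _; rewrite relgenZ.
Qed.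

Lemma inK_j_relgen s w p : inK_j (relgen s w p).
Proof. by exists [:: (s, w, p)]; rewrite big_seq1. Qed.

Lemma inK_j_sum (I : Type) (r : seq I) (Q : pred I) (F : I -> T P n j) :
  (forall i, Q i -> inK_j (F i)) -> inK_j (\sum_(i <- r | Q i) F i).
Proof. by move=> FK; apply: big_ind => //; [exact: inK_j0 | exact: inK_jD]. Qed.

Lemma hT_relgen s w p :
  hT (relgen s w p) =
  \sum_(k < j | (w k).2) relgen s (seteven w k) (sgn (nodd_before w k) *: p).
Proof.
rewrite /relgen linearB linearZ /= !hT_pt (reindex_inj (@perm_inj _ s)) /=.
under eq_bigl => k do rewrite wact_perm.
under eq_bigr => k _ do rewrite seteven_wact.
rewrite scaler_sumr -sumrB; apply: eq_bigr => k wk.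
by rewrite sp_actZ !ptZ !scalerA ksign_seteven // [in RHS]mulrC.
Qed.

Lemma inK_j_hT c : inK_j c -> inK_j (hT c).
Proof.
move=> [l ->]; rewrite linear_sum /=; apply: inK_j_sum => x _.
by rewrite hT_relgen; apply: inK_j_sum => k _; apply: inK_j_relgen.
Qed.

Lemma hT_support c v : hT c v != 0 -> exists2 k, ~~ (v k).2 & c (setodd v k) != 0.
Proof.
have [k /andP[vk ck] _|none] := pickP (fun k => ~~ (v k).2 && (c (setodd v k) != 0)).
  by exists k.
rewrite ffunE big1 ?eqxx // => k vk.
by move: (none k); rewrite vk /= => /negbFE/eqP ->; rewrite scaler0.
Qed.

Lemma homotopy_inK_j c : (0 < j)%N -> inK_j (dT c) ->
  inK_j (c - dT (j%:R^-1 *: hT c)).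
Proof.
move=> j_gt0 dcK; have j_neq0 : j%:R != 0 :> rat by rewrite pnatr_eq0 -lt0n.
suff -> : c - dT (j%:R^-1 *: hT c) = j%:R^-1 *: hT (dT c) by apply/inK_jZ/inK_j_hT.
rewrite linearZ /= -[dT (hT c)](addrK (hT (dT c))) dT_hT_homotopy.
by rewrite scalerBr scalerA mulVf // scale1r opprB addrC subrK.
Qed.

End Coinvariants.

Theorem lemma6p2 (P : species) (n : nat) :
  (forall p : P 0%N, p = 0) -> (0 < n)%N ->
  (forall c : Om P n, finsupp c -> homog 0 c -> inK (dOm c) -> inK c) /\
  (forall (k : nat) (c : Om P n), finsupp c -> homog k.+1 c -> inK (dOm c) ->
     exists b : Om P n,
       [/\ finsupp b, homog k b & inK (fun j => c j - dOm b j)]).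
Proof.
move=> P0 _.
have inK_j_arity0 (x : T P n 0) : inK_j x.
  suff -> : x = 0 by exact: inK_j0.
  by apply/ffunP=> w; rewrite ffunE; apply: P0.
split=> [c _ c_homog dcK|m c [N cN] c_homog dcK].
- case=> [|j]; first exact: inK_j_arity0.
  have hc0 : hT (c j.+1) = 0.
    apply/ffunP=> v; rewrite [RHS]ffunE; apply/eqP; apply: contraT.
    by case/hT_support=> k vk /c_homog; rewrite nodd_setodd.
  by have := homotopy_inK_j (ltn0Sn j) (dcK j.+1); rewrite hc0 scaler0 linear0 subr0.
- exists (fun j => j%:R^-1 *: hT (c j)); split.
  + by exists N => j /cN ->; rewrite linear0 scaler0.
  + move=> j w; rewrite ffunE => nz.
    have : hT (c j) w != 0 by apply: contraNneq nz => ->; rewrite scaler0.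
    by case/hT_support=> k wk /c_homog; rewrite nodd_setodd // => -[].
  + case=> [|j]; first exact: inK_j_arity0.
    exact: homotopy_inK_j.
Qed.
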